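(* Fix $t\in\{1,\dots,M\}$ and let $z^*\in F(\mathcal{T}_t)$ with $|K_t(z^* )|=1$. Set $$r_t=\min\Big\{d_{sep}(z^*,C_t),\ \frac{d_{sep}(z^*,C_t)+d_{esc}(z^*,C_t)}{2}\Big\}.$$ Then every $z\in B(z^*,r_t)$ satisfies $K_t(z)=K_t(z^* )$.
   Context: Fix reals $W,H>0$, integers $N\ge N_m\ge 2$, and widths $w_i>0$, heights $h_i>0$ for $1\le i\le N_m$. Points of $\mathbb{R}^{2N}$ are written $z=(x,y)$ with $x=(x_1,\dots,x_N)$, $y=(y_1,\dots,y_N)$. For $1\le i\le N_m$ let $B_i^x=\{z: 0\le x_i\le W-w_i\}$, $B_i^y=\{z: 0\le y_i\le H-h_i\}$; for $i\neq j$ let $B_{i,j}=B_i^x\cap B_i^y\cap B_j^x\cap B_j^y$, $O^x_{i,j}=\{z: x_i+w_i\le x_j\}$, $O^y_{i,j}=\{z: y_i+h_i\le y_j\}$. Define the closed convex sets $C_{i,j,\mathsf{L}}=O^x_{i,j}\cap B_{i,j}$, $C_{i,j,\mathsf{R}}=O^x_{j,i}\cap B_{i,j}$, $C_{i,j,\mathsf{B}}=O^y_{i,j}\cap B_{i,j}$, $C_{i,j,\mathsf{A}}=O^y_{j,i}\cap B_{i,j}$ (assumed nonempty) and $C_{i,j}=C_{i,j,\mathsf{L}}\cup C_{i,j,\mathsf{R}}\cup C_{i,j,\mathsf{B}}\cup C_{i,j,\mathsf{A}}$. Enumerate the pairs $1\le i<j\le N_m$ by $t=1,\dots,M$ and write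 $C_t=C_{i,j}$, $C_{t,k}=C_{i,j,k}$. With the Euclidean norm and $\mathrm{d}(z,C)=\inf_{c\in C}\|z-c\|$: $\mathcal{P}_t(z)=\{c\in C_t:\|z-c\|=\mathrm{d}(z,C_t)\}$, $P_{t,k}(z)$ is the unique nearest point of $C_{t,k}$ to $z$; for a fixed $\lambda\in(0,2)$, $\mathcal{T}_t(z)=\{z+\lambda(p-z):p\in\mathcal{P}_t(z)\}$, $F(\mathcal{T}_t)=\{z: z\in\mathcal{T}_t(z)\}$. Active indices: $K_t(z)=\{k\in\{\mathsf{L},\mathsf{R},\mathsf{B},\mathsf{A}\}: P_{t,k}(z)\in\mathcal{P}_t(z)\}$. $d_{esc}(z^*,C_t)=\inf\{\|z-z^*\| : z\notin C_{t,k}\text{ for some }k\in K_t(z^* )\}$; $d_{sep}(z^*,C_t)=\min\{\mathrm{d}(z^*,C_{t,k}) : k\notin K_t(z^* )\}$. $B(z,r)$ is the open Euclidean ball (empty if $r=0$). *)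

(* R : realType, points of R^(2N) are pairs (x, y)
   of functions 'I_N -> R. *)
From HB Require Import structures.
From mathcomp Require Import all_boot all_order all_algebra.
From mathcomp Require Import all_classical all_reals.
Set Implicit Arguments. Unset Strict Implicit. Unset Printing Implicit Defensive.
Import Order.TTheory GRing.Theory Num.Theory.
Local Open Scope ring_scope.
Local Open Scope classical_set_scope.

(* the four relative positions L (left), R (right), B (below), A (above) *)
Inductive side := sL | sR | sB | sA.

Section Packing.
Variables (R : realType) (N : nat).

Definition pt := (('I_N -> R) * ('I_N -> R))%type.

Definition edist (z c : pt) : R :=
  Num.sqrt (\sum_(i < N) ((z.1 i - c.1 i) ^+ 2 + (z.2 i - c.2 i) ^+ 2)).

Definition dset (z : pt) (C : set pt) : R := inf [set edist z c | c in C].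

Definition oball (z : pt) (r : R) : set pt := [set u | edist z u < r].

Variables (W H : R) (w h : 'I_N -> R).

Definition Bx (i : 'I_N) : set pt := [set z | 0 <= z.1 i <= W - w i].
Definition By (i : 'I_N) : set pt := [set z | 0 <= z.2 i <= H - h i].
Definition Bij (i j : 'I_N) : set pt := Bx i `&` By i `&` Bx j `&` By j.
Definition Ox (i j : 'I_N) : set pt := [set z | z.1 i + w i <= z.1 j].
Definition Oy (i j : 'I_N) : set pt := [set z | z.2 i + h i <= z.2 j].

Definition Csub (i j : 'I_N) (k : side) : set pt :=
  match k with
  | sL => Ox i j `&` Bij i j
  | sR => Ox j i `&` Bij i j
  | sB => Oy i j `&` Bij i j
  | sA => Oy j i `&` Bij i j
  end.

Definition Cpair (i j : 'I_N) : set pt :=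
  Csub i j sL `|` Csub i j sR `|` Csub i j sB `|` Csub i j sA.

Definition nearest (C : set pt) (z : pt) : set pt :=
  [set c | C c /\ edist z c = dset z C].

Definition Pt (i j : 'I_N) (z : pt) : set pt := nearest (Cpair i j) z.

Definition relax (lam : R) (z p : pt) : pt :=
  ((fun l => z.1 l + lam * (p.1 l - z.1 l)),
   (fun l => z.2 l + lam * (p.2 l - z.2 l))).

Definition Tt (lam : R) (i j : 'I_N) (z : pt) : set pt :=
  [set relax lam z p | p in Pt i j z].

Definition FixT (lam : R) (i j : 'I_N) : set pt := [set z | Tt lam i j z z].

Definition Kt (i j : 'I_N) (z : pt) : set side :=
  [set k | exists p, nearest (Csub i j k) z p /\ Pt i j z p].

Definition desc (i j : 'I_N) (zs : pt) : R :=
  inf [set edist z zs | z in [set z | exists k, Kt i j zs k /\ ~ Csub i j k z]].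

(* d_sep(zs, C_t) = min over k not in K_t(zs) of d(zs, C_{t,k})
   (a finite set, so its infimum is its minimum) *)
Definition dsep (i j : 'I_N) (zs : pt) : R :=
  inf [set dset zs (Csub i j k) | k in ~` Kt i j zs].

End Packing.

From Pilot Require Import Defs.
From HB Require Import structures.
From mathcomp Require Import all_boot all_order all_algebra.
From mathcomp Require Import all_classical all_reals.
From mathcomp Require Import topology normedtype derive.
From mathcomp Require Import lra ring.
(* Re-import Defs so that its [edist] shadows the one of topology. *)
Import Defs.
Import Order.TTheory GRing.Theory Num.Theory numFieldNormedType.Exports.
Local Open Scope ring_scope.
Local Open Scope classical_set_scope.
Set Implicit Arguments. Unset Strict Implicit.

(* At a fixed point z^* of T_t the relaxed projection does not move, so z^* is
   its own nearest point in C_t and lies in the unique active piece C_{t,k0}.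
   Let d = ||z - z^*||.  Every inactive piece C_{t,k} is at distance at least
   d_sep - d from z, since d(., C) is 1-Lipschitz.  On the other hand the open
   ball of radius d_esc about z^* lies in C_{t,k0}, so walking from z towards
   z^* reaches C_{t,k0} after less than d_sep - d whenever 2d < d_sep + d_esc.
   Hence d(z, C_{t,k0}) < d(z, C_{t,k}) for all k <> k0, and the nearest points
   of C_t to z are exactly those of C_{t,k0}.  These exist because C_{t,k} only
   constrains x_i, x_j, y_i, y_j, through a box and a polygon
   {0 <= a <= A, 0 <= b <= B, a + w <= b}; on the polygon the squared distance
   is minimised by the extreme value theorem in a, with b clamped to its
   admissible interval. *)

Section EuclideanDistance.
Variables (R : realType) (N : nat).
Implicit Types (a b c z : pt R N) (S : set (pt R N)).

Lemma edist_ge0 a b : 0 <= edist a b.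
Proof. exact: sqrtr_ge0. Qed.

Lemma edistC a b : edist a b = edist b a.
Proof. by rewrite /edist; congr Num.sqrt; apply: eq_bigr => l _; ring. Qed.

Lemma edistxx a : edist a a = 0.
Proof. by rewrite /edist big1 ?sqrtr0 // => l _; rewrite !subrr; ring. Qed.

Lemma ge0_quadratic_discr (X Y Z : R) : 0 <= Z ->
  (forall t, 0 <= X + 2 * t * Y + t ^+ 2 * Z) -> Y ^+ 2 <= X * Z.
Proof.
move=> Z0 nonneg; have X0 : 0 <= X by have := nonneg 0; nra.
have [Zgt0|Zle0] := ltP 0 Z.
  have tZ : (- Y / Z) * Z = - Y by rewrite divfK // gt_eqF.
  by have := nonneg (- Y / Z); nra.
have {Zle0} Zeq0 : Z = 0 by apply/eqP; rewrite eq_le Zle0 Z0.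
have [-> | Yneq0] := eqVneq Y 0; first by rewrite Zeq0; lra.
have tY : 2 * (- (X + 1) / (2 * Y)) * Y = - (X + 1) by field.
by have := nonneg (- (X + 1) / (2 * Y)); rewrite tY Zeq0; lra.
Qed.

Lemma minkowski {I : finType} (p q r s : I -> R) :
  Num.sqrt (\sum_l ((p l + r l) ^+ 2 + (q l + s l) ^+ 2)) <=
  Num.sqrt (\sum_l (p l ^+ 2 + q l ^+ 2)) + Num.sqrt (\sum_l (r l ^+ 2 + s l ^+ 2)).
Proof.
set X := \sum_l (p l ^+ 2 + q l ^+ 2).
set Z := \sum_l (r l ^+ 2 + s l ^+ 2).
set Y := \sum_l (p l * r l + q l * s l).
have X0 : 0 <= X by apply: sumr_ge0 => l _; rewrite addr_ge0 ?sqr_ge0.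
have Z0 : 0 <= Z by apply: sumr_ge0 => l _; rewrite addr_ge0 ?sqr_ge0.
have expand t : \sum_l ((p l + t * r l) ^+ 2 + (q l + t * s l) ^+ 2)
    = X + 2 * t * Y + t ^+ 2 * Z.
  by rewrite /X /Y /Z !mulr_sumr -!big_split /=; apply: eq_bigr => l _; ring.
have cauchy_schwarz : Y <= Num.sqrt X * Num.sqrt Z.
  have : Y ^+ 2 <= X * Z.
    apply: ge0_quadratic_discr => // t; rewrite -expand.
    by apply: sumr_ge0 => l _; rewrite addr_ge0 ?sqr_ge0.
  rewrite -sqrtrM // -ler_sqrt ?mulr_ge0 // sqrtr_sqr => YXZ.
  exact: le_trans (ler_norm Y) YXZ.
have := expand 1; under eq_bigr do rewrite !mul1r; move->.
rewrite -[leRHS]ger0_norm ?addr_ge0 ?sqrtr_ge0 // -sqrtr_sqr ler_sqrt ?sqr_ge0 //.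
by rewrite sqrrD !sqr_sqrtr //; lra.
Qed.

Lemma edist_triangle a b c : edist a c <= edist a b + edist b c.
Proof.
have := minkowski (fun l => a.1 l - b.1 l) (fun l => a.2 l - b.2 l)
  (fun l => b.1 l - c.1 l) (fun l => b.2 l - c.2 l).
congr (Num.sqrt _ <= _); apply: eq_bigr => l _ /=.
by congr (_ ^+ 2 + _ ^+ 2); ring.
Qed.

Lemma edist_scale a b c d (t : R) :
  (forall l, a.1 l - b.1 l = t * (c.1 l - d.1 l)) ->
  (forall l, a.2 l - b.2 l = t * (c.2 l - d.2 l)) ->
  edist a b = `|t| * edist c d.
Proof.
move=> e1 e2; rewrite /edist -sqrtr_sqr -sqrtrM ?sqr_ge0 //; congr Num.sqrt.
by rewrite mulr_sumr; apply: eq_bigr => l _; rewrite e1 e2; ring.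
Qed.

Definition sqdist (f g : 'I_N -> R) := \sum_l (f l - g l) ^+ 2.

Lemma edist_sqdist a b : edist a b = Num.sqrt (sqdist a.1 b.1 + sqdist a.2 b.2).
Proof. by rewrite /edist big_split. Qed.

Lemma dset_le z {S c} : S c -> dset z S <= edist z c.
Proof.
move=> Sc; apply: ge_inf; last by exists c.
by exists 0 => _ [c' _ <-]; exact: edist_ge0.
Qed.

Lemma dset_ge z S x : S !=set0 -> (forall c, S c -> x <= edist z c) -> x <= dset z S.
Proof.
move=> [c0 Sc0] lb; apply: lb_le_inf; first by exists (edist z c0), c0.
by move=> _ [c Sc <-]; exact: lb.
Qed.

Lemma dset_ge0 z S : 0 <= dset z S.
Proof.
have [-> | /set0P S0] := eqVneq S set0; first by rewrite /dset image_set0 inf0.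
by apply: dset_ge => // c _; exact: edist_ge0.
Qed.

Lemma nearestP S z p :
  nearest S z p <-> S p /\ forall c, S c -> edist z p <= edist z c.
Proof.
split=> [[Sp ->] | [Sp pmin]]; first by split=> // c; exact: dset_le.
split=> //; apply/eqP; rewrite eq_le dset_le // andbT.
by apply: dset_ge; first exists p.
Qed.

Lemma dset_lipschitz a b S : S !=set0 -> dset a S <= edist a b + dset b S.
Proof.
move=> S0; rewrite -lerBlDl; apply: dset_ge => // c Sc.
by have := dset_le a Sc; have := edist_triangle a b c; lra.
Qed.

(* Walk from z towards a: the point of [a, z] at distance s from a, with
   d - rho < s < e, lies in the ball and is within d - s < rho of z. *)
Lemma near_point_of_ball_sub S a z e rho : S a ->
  (forall y, edist y a < e -> S y) -> 0 < rho -> edist a z < rho + e ->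
  exists2 q, S q & edist z q < rho.
Proof.
move=> Sa ballS rho0; set d := edist a z => dlt.
have [d_rho | rho_d] := ltP d rho; first by exists a; rewrite // edistC.
have d0 : 0 < d by exact: lt_le_trans rho0 rho_d.
have [s [rho_s s_e s_d]] : exists s, [/\ d - rho < s, s < e & s <= d].
  have min_lb : d - rho < Num.min e d by rewrite lt_min; apply/andP; split; lra.
  have min_e : Num.min e d <= e by rewrite ge_min lexx.
  have min_d : Num.min e d <= d by rewrite ge_min lexx orbT.
  by exists ((d - rho + Num.min e d) / 2); split; lra.
have t0 : 0 <= s / d by rewrite divr_ge0 //; lra.
have t1 : s / d <= 1 by rewrite ler_pdivrMr // mul1r.
pose q := relax (s / d) a z.
have qa : edist q a = s.
  rewrite (@edist_scale _ _ z a (s / d)) => [|l|l] /=; try ring.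
  by rewrite ger0_norm // edistC -/d divfK ?gt_eqF.
have zq : edist z q = d - s.
  rewrite (@edist_scale _ _ z a (1 - s / d)) => [|l|l] /=; try ring.
  by rewrite ger0_norm ?subr_ge0 // edistC -/d mulrBl mul1r divfK ?gt_eqF.
by exists q; [apply: ballS; rewrite qa; lra | rewrite zq; lra].
Qed.

End EuclideanDistance.

Section PlanarProjection.
Variable R : realType.

Definition clamp (lo hi x : R) := Num.max lo (Num.min x hi).

Lemma clamp_itv {lo hi} x : lo <= hi -> lo <= clamp lo hi x <= hi.
Proof. by move=> lohi; rewrite /clamp le_max ge_max ge_min !lexx lohi orbT. Qed.

Lemma clamp_nearest {lo hi d} x : lo <= d <= hi ->
  (x - clamp lo hi x) ^+ 2 <= (x - d) ^+ 2.
Proof.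
move=> /andP[lod dhi]; rewrite /clamp maxEle minEle.
have := sqr_ge0 (x - d).
have [xhi|hix] := leP x hi; first by have [lox|xlo] := leP lo x => /=; nra.
have lohi : lo <= hi by lra.
by rewrite lohi /=; nra.
Qed.

Lemma continuous_sqr_sub (v : R) (f : R -> R) :
  continuous f -> continuous (fun a => (v - f a) ^+ 2).
Proof.
move=> cf a; have cvf : {for a, continuous (fun a => v - f a)}.
  exact: (@continuousB _ _ _ (fun=> v) f a (cvg_cst _) (cf a)).
exact: (continuousM cvf cvf).
Qed.

Definition nearest2 (G : R -> R -> Prop) (u v a b : R) :=
  G a b /\ forall c d, G c d -> (u - a) ^+ 2 + (v - b) ^+ 2 <= (u - c) ^+ 2 + (v - d) ^+ 2.

Definition proximinal2 (G : R -> R -> Prop) :=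
  forall u v, (exists a b, G a b) -> exists a b, nearest2 G u v a b.

Definition box2 (A B a b : R) := 0 <= a <= A /\ 0 <= b <= B.

Definition ordered2 (A B w a b : R) := box2 A B a b /\ a + w <= b.

Lemma proximinal_box2 A B : proximinal2 (box2 A B).
Proof.
move=> u v [a0 [b0 [/andP[a00 a0A] /andP[b00 b0B]]]].
exists (clamp 0 A u), (clamp 0 B v); split=> [|c d [cI dI]].
  by split; apply: clamp_itv; lra.
by have := clamp_nearest u cI; have := clamp_nearest v dI; lra.
Qed.

Lemma proximinal_ordered2 A B w : proximinal2 (ordered2 A B w).
Proof.
move=> u v [a0 [b0 feas0]].
pose lo a := Num.max 0 (a + w).
(* squared distance to the nearest admissible point with first coordinate a *)
pose slice a := (u - a) ^+ 2 + (v - clamp (lo a) B v) ^+ 2.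
pose A' := Num.min A (B - w).
have feasible c d : ordered2 A B w c d -> 0 <= c <= A' /\ lo c <= d <= B.
  move=> [[/andP[c0 cA] /andP[d0 dB]] cd].
  have cA' : c <= A' by rewrite le_min cA /=; lra.
  have loc : lo c <= d by rewrite ge_max d0.
  by rewrite c0 cA' loc dB.
have [/andP[a00 a0A'] /andP[lob0 b0B]] := feasible _ _ feas0.
have [a aI amin] :
    exists2 a, a \in `[0, A']%R & forall c, c \in `[0, A']%R -> slice a <= slice c.
  apply: EVT_min; first exact: le_trans a00 a0A'.
  apply: continuous_subspaceT => x.
  have clo : continuous lo.
    move=> y; apply: (@continuous_max _ _ (fun=> 0) (fun y => y + w)); first exact: cvg_cst.
    by apply: cvgD; [exact: cvg_id | exact: cvg_cst].
  have cb : continuous (fun a => clamp (lo a) B v).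
    by move=> y; exact: (@continuous_max _ _ lo (fun=> Num.min v B) y (clo y) (cvg_cst _)).
  have cu := @continuous_sqr_sub u id (fun _ => cvg_id).
  have cv := @continuous_sqr_sub v _ cb.
  exact: (continuousD (cu x) (cv x)).
move: aI; rewrite in_itv /= le_min => /andP[a_ge0 /andP[aA aBw]].
have loB : lo a <= B.
  by rewrite ge_max; move: lob0; rewrite ge_max => /andP[? ?]; apply/andP; split; lra.
have /andP[lob bB] := clamp_itv v loB; move: lob; rewrite ge_max => /andP[b0' ab].
exists a, (clamp (lo a) B v); split=> [|c d cd]; first by split; [split; apply/andP|].
have [cI dI] := feasible c d cd.
have := amin c; rewrite in_itv /= => /(_ cI); have := clamp_nearest v dI; rewrite /slice; lra.
Qed.

End PlanarProjection.

Section CoordinateSplitting.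
Variables (R : realType) (N : nat).

Lemma sum_split2 (F : 'I_N -> R) (p q : 'I_N) : p != q ->
  \sum_l F l = F p + F q + \sum_(l | (l != p) && (l != q)) F l.
Proof.
move=> pq; rewrite (bigD1 p) //= (bigD1 q) /= ?(eq_sym q) ?pq // addrA.
by congr (_ + _ + _); apply: eq_bigl => l.
Qed.

Lemma exists_sqdist_min2 (G : R -> R -> Prop) (p q : 'I_N) (u : 'I_N -> R) a b :
  p != q -> nearest2 G (u p) (u q) a b ->
  exists2 f, G (f p) (f q) & forall g, G (g p) (g q) -> sqdist u f <= sqdist u g.
Proof.
move=> pq [Gab abmin].
pose f l := if l == p then a else if l == q then b else u l.
have qp : (q == p) = false by rewrite eq_sym; exact: negbTE.
have [fp fq] : f p = a /\ f q = b by rewrite /f eqxx qp eqxx.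
exists f => [|g Gg]; first by rewrite fp fq.
rewrite /sqdist !(sum_split2 _ pq) fp fq big1 => [|l /andP[lp lq]]; last first.
  by rewrite /f (negbTE lp) (negbTE lq) subrr expr0n.
rewrite addr0 (le_trans (abmin _ _ Gg)) // lerDl.
by apply: sumr_ge0 => l _; exact: sqr_ge0.
Qed.

Lemma nearest_split (P Q : ('I_N -> R) -> Prop) (z : pt R N) f g :
  P f -> (forall f', P f' -> sqdist z.1 f <= sqdist z.1 f') ->
  Q g -> (forall g', Q g' -> sqdist z.2 g <= sqdist z.2 g') ->
  nearest [set c | P c.1 /\ Q c.2] z (f, g).
Proof.
move=> Pf fmin Qg gmin; apply/nearestP; split=> // c [Pc Qc].
rewrite !edist_sqdist ler_sqrt ?lerD ?fmin ?gmin //.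
by rewrite addr_ge0 // sumr_ge0 // => l _; exact: sqr_ge0.
Qed.

Lemma proximinal_split (G1 G2 : R -> R -> Prop) (p1 q1 p2 q2 : 'I_N) {S z} :
  p1 != q1 -> p2 != q2 -> proximinal2 G1 -> proximinal2 G2 ->
  S = [set c | G1 (c.1 p1) (c.1 q1) /\ G2 (c.2 p2) (c.2 q2)] ->
  S !=set0 -> exists p, nearest S z p.
Proof.
move=> pq1 pq2 prox1 prox2 -> [c0 [G1c0 G2c0]].
have [a1 [b1 /(exists_sqdist_min2 pq1) [f Gf fmin]]] :=
  prox1 (z.1 p1) (z.1 q1) (ex_intro _ _ (ex_intro _ _ G1c0)).
have [a2 [b2 /(exists_sqdist_min2 pq2) [g Gg gmin]]] :=
  prox2 (z.2 p2) (z.2 q2) (ex_intro _ _ (ex_intro _ _ G2c0)).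
exists (f, g).
exact: (nearest_split (P := fun f => G1 (f p1) (f q1)) (Q := fun g => G2 (g p2) (g q2))).
Qed.

End CoordinateSplitting.

Section ActiveSides.
Variables (R : realType) (N : nat) (W H : R) (w h : 'I_N -> R) (i j : 'I_N).
Local Notation C := (Csub W H w h i j).

Lemma Cpair_Csub c : Cpair W H w h i j c <-> exists k, C k c.
Proof.
split=> [[[[Cc|Cc]|Cc]|Cc] | [[] Cc]];
  by [exists sL | exists sR | exists sB | exists sA
     | left; left; left | left; left; right | left; right | right].
Qed.

Lemma exists_nearest_Csub k z : i != j -> C k !=set0 -> exists p, nearest (C k) z p.
Proof.
move=> ij; have ji : j != i by rewrite eq_sym.
have oxij := @proximinal_ordered2 _ (W - w i) (W - w j) (w i).
have oxji := @proximinal_ordered2 _ (W - w j) (W - w i) (w j).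
have oyij := @proximinal_ordered2 _ (H - h i) (H - h j) (h i).
have oyji := @proximinal_ordered2 _ (H - h j) (H - h i) (h j).
have bx := @proximinal_box2 _ (W - w i) (W - w j).
have by' := @proximinal_box2 _ (H - h i) (H - h j).
case: k; [ apply: (proximinal_split ij ij oxij by')
         | apply: (proximinal_split ji ij oxji by')
         | apply: (proximinal_split ij ij bx oyij)
         | apply: (proximinal_split ij ji bx oyji) ];
by rewrite /Csub /Ox /Oy /Defs.Bij /Bx /By; apply/seteqP; split=> c /=;
   rewrite /ordered2 /box2; tauto.
Qed.

Lemma Kt_Csub k z : C k z -> Kt W H w h i j z k.
Proof.
move=> Cz; have self S : S z -> nearest S z z.
  by move=> Sz; apply/nearestP; split=> // c _; rewrite edistxx edist_ge0.
by exists z; split; apply: self => //; apply/Cpair_Csub; exists k.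
Qed.

Lemma Kt_eq_set1 z k0 : (exists p, nearest (C k0) z p) ->
  (forall k, k <> k0 -> dset z (C k0) < dset z (C k)) -> Kt W H w h i j z = [set k0].
Proof.
move=> [p0 [Cp0 p0min]] sep.
have Cp0' : Cpair W H w h i j p0 by apply/Cpair_Csub; exists k0.
have Pp0 : Pt W H w h i j z p0.
  apply/nearestP; split=> // c /Cpair_Csub[k Ck]; rewrite p0min.
  have [<- | kk0] := pselect (k = k0); first exact: dset_le.
  exact: ltW (lt_le_trans (sep k kk0) (dset_le z Ck)).
apply/seteqP; split=> k; last by move=> /= ->; exists p0.
move=> [p [[Cp pmin] /nearestP[_ Pmin]]] /=; apply: contrapT => kk0.
by have := sep k kk0; have := Pmin p0 Cp0'; rewrite pmin p0min; lra.
Qed.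

Lemma dsep_le zs k : ~ Kt W H w h i j zs k -> dsep W H w h i j zs <= dset zs (C k).
Proof.
move=> nK; apply: ge_inf; last by exists k.
by exists 0 => _ [k' _ <-]; exact: dset_ge0.
Qed.

Lemma desc_le zs k y : Kt W H w h i j zs k -> ~ C k y -> desc W H w h i j zs <= edist y zs.
Proof.
move=> Kk nCy; apply: ge_inf; last by exists y => //; exists k.
by exists 0 => _ [y' _ <-]; exact: edist_ge0.
Qed.

End ActiveSides.

Lemma FixT_Pt (R : realType) (N : nat) (W H : R) (w h : 'I_N -> R) lam i j z :
  lam != 0 -> FixT W H w h lam i j z -> Pt W H w h i j z z.
Proof.
move=> lam0 [p Pp /(congr1 (fun u => (u.1, u.2))) /= [e1 e2]].
suff pz : p = z by move: Pp; rewrite pz.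
have coord (x y : 'I_N -> R) : (fun l => y l + lam * (x l - y l)) = y -> x = y.
  move=> e; apply/funext => l; have /eqP := congr1 (fun f => f l) e.
  by rewrite -subr_eq0 (addrC (y l)) addrK mulf_eq0 (negbTE lam0) subr_eq0 => /eqP.
by rewrite [p]surjective_pairing [z]surjective_pairing (coord _ _ e1) (coord _ _ e2).
Qed.

Theorem mainTheorem5 (R : realType) (N Nm : nat) (W H : R)
  (w h : 'I_N -> R) (lam : R) (i j : 'I_N) (zs : pt R N) :
  0 < W -> 0 < H -> (2 <= Nm)%N -> (Nm <= N)%N ->
  (forall l : 'I_N, (l < Nm)%N -> 0 < w l /\ 0 < h l) ->
  (forall (a b : 'I_N) (k : side), (a < b)%N -> (b < Nm)%N ->
      Csub W H w h a b k !=set0) ->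
  0 < lam < 2 ->
  (i < j)%N -> (j < Nm)%N ->
  FixT W H w h lam i j zs ->
  (exists k0 : side, Kt W H w h i j zs = [set k0]) ->
  let ds := dsep W H w h i j zs in
  let de := desc W H w h i j zs in
  let r := Num.min ds ((ds + de) / 2) in
  forall z : pt R N, oball zs r z -> Kt W H w h i j z = Kt W H w h i j zs.
Proof.
(* Only nonemptiness of the C_{t,k} matters: no sizes need to be positive. *)
move=> _ _ _ _ _ Cne /andP[lam0 _] ij jNm Fix [k0 Kzs] ds de r z zs_z.
have ij' : i != j by rewrite neq_ltn ij.
have Kk0 : Kt W H w h i j zs k0 by rewrite Kzs.
have Czs : Csub W H w h i j k0 zs.
  have /Cpair_Csub[k Ck] := (FixT_Pt (lt0r_neq0 lam0) Fix).1.
  by move: (Kt_Csub Ck); rewrite Kzs => /= <-.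
have [d_ds d_dsde] : edist zs z < ds /\ edist zs z < (ds + de) / 2.
  by move: zs_z; rewrite /oball /= lt_min => /andP[].
have [q Cq zq] : exists2 q, Csub W H w h i j k0 q & edist z q < ds - edist zs z.
  apply: (near_point_of_ball_sub (e := de) Czs); [move=> y yzs | lra | lra].
  by apply: contrapT => /(desc_le Kk0); rewrite -/de; lra.
rewrite Kzs; apply: Kt_eq_set1 => [|k kk0].
  exact: exists_nearest_Csub ij' (Cne i j k0 ij jNm).
have nKk : ~ Kt W H w h i j zs k by rewrite Kzs.
have := dsep_le nKk; rewrite -/ds.
have := dset_lipschitz zs z (Cne i j k ij jNm); have := dset_le z Cq; lra.
Qed.
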